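(* Let $D$ be a connected oriented virtual singular link diagram with $k$ components, and let $S_0$ be the state of $D$ obtained by applying the oriented resolution at every classical and singular crossing of $D$. Then $\overline{R}(S_0)\in\mathbb{Z}[A^4,A^{-4}]\cdot A^{2k}$.
   Context: An oriented virtual singular link diagram is a generic immersion of finitely many oriented circles (its components) into $\mathbb{R}^2$ with finitely many transverse double points, each decorated as a classical crossing (with over/under information and the usual sign $\pm1$), a singular crossing, or a virtual crossing. The diagram is connected if it is not a disjoint union of two nonempty diagrams (i.e., its image in the plane is connected). At a classical or singular crossing, the oriented resolution replaces it by two disjoint arcs respecting orientation; the disoriented resolution replaces it by one arc joining the two incoming ends with a sink bivalent vertex and one arc joining the two outgoing ends with a source bivalent vertex. Virtual crossings are kept. A state $S$ of $D$ is a choice of resolution at every classical and singular crossing; it is a collection of immersed closed curves (all intersections virtual). $\|S\|$ = number of closed curves of $S$; $a(S)$ = #(negative classical crossings with oriented resolution) $-$ #(positive classical crossings with oriented resolution); $b(S)$ the same for disoriented resolutions; $\alpha(S),\beta(S)$ = numbers of singular crossings with oriented, resp. disoriented, resolution. The weighted state contribution is $\overline{R}(S)=A^{2a(S)+4b(S)}(-A^2-A^{-2})^{\alpha(S)+\|S\|}(-A^4-A^{-4})^{\beta(S)}h^{\frac{1-i(S)}{2}}$, where $i(S)\in\{\pm1\}$ is the parity of $S$: choosing a map $\tau$ from the edges of $S$ (arcs between consecutive bivalent vertices; a closed curve without vertices is one edge) to $\{\pm1\}$ with different values on edges sharing a vertex, $i(S)$ is the product over all virtual crossings $v$ of $\tau(e)\tau(e')$,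 where $e,e'$ are the edges meeting at $v$ (independent of $\tau$). (For $S_0$, which has no bivalent vertices, $i(S_0)=1$.) *)

From HB Require Import structures.
From mathcomp Require Import all_boot all_order all_fingroup all_algebra.

Set Implicit Arguments.
Unset Strict Implicit.
Unset Printing Implicit Defensive.

Import Order.TTheory GRing.Theory Num.Theory.

(* At each crossing two strands pass; they are labelled by a bool.  A        *)
(* "passage" (c, s) is the passage of the link through crossing c along      *)
(* strand s.  nextp (c, s) is the passage reached next when one leaves c     *)
(* along strand s following the orientation (a permutation of passages).     *)
(* nfree is the number of components carrying no crossing at all.           *)
(* The plane immersion is encoded by a rotation system: a dart (c, s, o) is  *)
(* the half-edge at c of strand s, outgoing if o = true, incoming otherwise. *)
(* rot c = true means the counterclockwise order of darts around c is        *)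
(*   in_false, in_true, out_false, out_true                                  *)
(* and rot c = false means it is in_false, out_true, out_false, in_true      *)
(* (transversality: the two darts of one strand are opposite).               *)

Inductive ckind := Classical of bool (* the over strand *) | Singular | Virtual.

Unset Implicit Arguments.
Record vsdiagram := VSDiagram {
  ncross : nat;
  kind : 'I_ncross -> ckind;
  nextp : {perm ('I_ncross * bool)};
  rot : 'I_ncross -> bool;
  nfree : nat
}.

Set Implicit Arguments.

Definition dart (D : vsdiagram) := ('I_(ncross D) * bool * bool)%type.

Definition symc (T : Type) (r : rel T) : rel T := fun x y => r x y || r y x.

Section Diagram.
Variable D : vsdiagram.
Local Notation n := (ncross D).
Local Notation pass := ('I_n * bool)%type.

Definition ncomp : nat := n_comp (symc (frel (nextp D))) (@predT pass) + nfree D.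

Definition cadj : rel 'I_n :=
  fun c c' => [exists s : bool, (nextp D (c, s)).1 == c'].

Definition connected_diagram : Prop :=
  if n == 0%N then is_true (nfree D <= 1)%N
  else (nfree D == 0%N) /\ forall c c' : 'I_n, connect (symc cadj) c c'.

Definition alpha (d : dart D) : dart D :=
  let: (c, s, o) := d in
  if o then let p := nextp D (c, s) in (p.1, p.2, false)
  else let p := ((nextp D)^-1)%g (c, s) in (p.1, p.2, true).

(* counterclockwise successor of a dart around its crossing *)
Definition sigma (d : dart D) : dart D :=
  let: (c, s, o) := d in
  if rot D c then (c, ~~ s, o (+) s) else (c, ~~ s, o (+) ~~ s).

Definition phi (d : dart D) : dart D := sigma (alpha d).

Definition nfaces : nat := n_comp (symc (frel phi)) (@predT (dart D)).

Definition ngraphcomp : nat := n_comp (symc cadj) (@predT 'I_n).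

(* the rotation system is a plane embedding: Euler's formula V - E + F = 2 *)
(* on every connected component (V = n, E = 2n).                            *)
Definition planar : Prop := nfaces = (n + 2 * ngraphcomp)%N.

(* A state: st c = true means disoriented resolution at c, false oriented   *)
(* (the value is irrelevant at virtual crossings).                          *)
Definition is_virtual (c : 'I_n) : bool := if kind D c is Virtual then true else false.
Definition is_singular (c : 'I_n) : bool := if kind D c is Singular then true else false.
Definition is_classical (c : 'I_n) : bool := if kind D c is Classical _ then true else false.
Definition is_positive (c : 'I_n) : bool :=
  if kind D c is Classical o then rot D c != o else false.
Definition is_negative (c : 'I_n) : bool :=
  if kind D c is Classical o then rot D c == o else false.

Definition arc_rel : rel (dart D) := fun d d' =>
  [&& d.2, ~~ d'.2 & (d'.1 == nextp D d.1)].

(* junctions of the state at the crossings; the bool says whether the     *)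
(* junction is a bivalent vertex (disoriented resolution)                 *)
Definition junction (st : 'I_n -> bool) (d d' : dart D) : bool :=
  let: (c, s, o) := d in let: (c', s', o') := d' in
  (c == c') &&
  (if is_virtual c then (s' == s) && ~~ o && o'
   else if st c then (o == o') && (s' == ~~ s)
   else (s' == ~~ s) && ~~ o && o').

Definition state_rel (st : 'I_n -> bool) : rel (dart D) :=
  symc (fun d d' => arc_rel d d' || junction st d d').

Definition ncurves (st : 'I_n -> bool) : nat :=
  n_comp (state_rel st) predT + nfree D.

Definition a_S (st : 'I_n -> bool) : int :=
  (#|[set c | is_negative c && ~~ st c]|%:Z - #|[set c | is_positive c && ~~ st c]|%:Z)%R.
Definition b_S (st : 'I_n -> bool) : int :=
  (#|[set c | is_negative c && st c]|%:Z - #|[set c | is_positive c && st c]|%:Z)%R.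
Definition alpha_S (st : 'I_n -> bool) : nat := #|[set c | is_singular c && ~~ st c]|.
Definition beta_S (st : 'I_n -> bool) : nat := #|[set c | is_singular c && st c]|.

(* tau : an edge labelling (on darts) constant along edges of the state and *)
(* changing at every bivalent vertex                                        *)
Definition tau_ok (st : 'I_n -> bool) (tau : {ffun dart D -> bool}) : bool :=
  [forall d : dart D, forall d' : dart D,
     (arc_rel d d' ==> (tau d == tau d')) &&
     (junction st d d' ==>
        ((tau d != tau d') == (~~ is_virtual d.1.1 && st d.1.1)))].

(* i(S) = -1 : the product over virtual crossings of tau(e) tau(e') is -1 *)
Definition odd_parity (st : 'I_n -> bool) : bool :=
  [exists tau : {ffun dart D -> bool}, tau_ok st tau &&
     odd #|[set v | is_virtual v && (tau (v, false, false) != tau (v, true, false))]|].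

End Diagram.

Definition LR := {fraction {poly {poly int}}}.
Definition Avar : LR := tofrac ('X : {poly {poly int}}).
Definition hvar : LR := tofrac (('X : {poly int})%:P).

Local Open Scope ring_scope.

Definition Rbar (D : vsdiagram) (st : 'I_(ncross D) -> bool) : LR :=
  Avar ^ (2 * a_S st + 4 * b_S st)
  * (- Avar ^+ 2 - Avar ^- 2) ^+ (alpha_S st + ncurves st)
  * (- Avar ^+ 4 - Avar ^- 4) ^+ (beta_S st)
  * (if odd_parity st then hvar else 1).

Definition S0 (D : vsdiagram) : 'I_(ncross D) -> bool := fun _ => false.
Arguments S0 : clear implicits.

(* In the all-oriented state S0 there are no disoriented resolutions, so b = beta = 0 and
   Rbar(S0) = A^(2a) (-A^2 - A^-2)^(alpha + |S0|) h^((1 - i)/2), whose expansion has the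
   exponents 2a - 2(alpha + |S0|) + 4j.  Two facts then give the claim.

   The curves of S0 are the cycles of the permutation of strand passages "go to the next
   crossing, then switch strands unless it is virtual": the permutation whose cycles are
   the k components, composed with one transposition per classical or singular crossing.
   Comparing signatures, |S0| = k + #classical + #singular (mod 2), that is
   a - alpha - |S0| = k (mod 2).

   The curves of S0 meet only at virtual crossings, so i(S0) = 1 says that two plane curves
   cross an even number of times.  Over F2: a connected plane diagram with n crossings has
   n + 2 faces by Euler's formula, which forces every cycle of its 4-valent graph (an edge
   labelling with even sum at each crossing) to be the coboundary of a 2-colouring of the
   faces.  A labelling of the curves of S0 is such a cycle.  For the colouring, the number
   of pairs of consecutive corners coloured 1 is even, while the contribution of a single
   crossing is odd exactly when it is virtual and its two strands carry different labels. *)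

From HB Require Import structures.
From Pilot Require Import Defs.
From mathcomp Require Import all_boot all_order all_fingroup all_algebra.
From mathcomp Require Import ring zify.

Set Implicit Arguments.
Unset Strict Implicit.
Unset Printing Implicit Defensive.

Import Order.TTheory GRing.Theory Num.Theory.
Local Open Scope ring_scope.

Lemma symc_sym (T : Type) (r : rel T) : symmetric (symc r).
Proof. by move=> x y; rewrite /symc orbC. Qed.

Lemma connect_sym_symc (T : finType) (r : rel T) : connect_sym (symc r).
Proof. exact/sym_connect_sym/symc_sym. Qed.

Lemma card_set_sum_nat (T : finType) (P : pred T) :
  #|[set x | P x]| = (\sum_x P x)%N.
Proof. by rewrite -sum1dep_card big_mkcond; apply: eq_bigr => x _; case: (P x). Qed.

Lemma n_comp_symc_perm (T : finType) (s : {perm T}) :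
  n_comp (symc (frel s)) predT = #|porbits s|.
Proof.
set e := symc (frel s); have sym_e : connect_sym e := connect_sym_symc _.
have connect_porbit x y : connect e x y = (y \in porbit s x).
  apply/idP/idP => [|/porbitP[i ->]]; last first.
    rewrite permX; apply: connect_sub (fconnect_iter s i x) => a b /eqP <-.
    by apply: connect1; rewrite /e /symc /= eqxx.
  have cl : closed e (porbit s x).
    have porbitS z : porbit s (s z) = porbit s z by exact: (porbit_perm s 1).
    apply: intro_closed => // a b /orP[] /eqP <-;
      by rewrite -!eq_porbit_mem => /eqP <-; rewrite porbitS.
  by move/(closed_connect cl) <-; rewrite porbit_id.
have -> : porbits s = porbit s @: [set x | roots e x].
  apply/setP => P; apply/imsetP/imsetP => -[x _ ->]; last by exists x.
  exists (fingraph.root e x); first by rewrite inE roots_root.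
  by apply/eqP; rewrite eq_porbit_mem -connect_porbit sym_e connect_root.
rewrite card_in_imset; first by apply: eq_card => x; rewrite !inE andbT.
move=> x y; rewrite !inE => /eqP rx /eqP ry /eqP.
by rewrite eq_porbit_mem -connect_porbit => /(fingraph.rootP sym_e); rewrite rx ry.
Qed.

Section Pullback.
Variable K : fieldType.

Definition pullback (I J : finType) (f : I -> J) (g : {ffun J -> K^o}) :
  {ffun I -> K^o} := [ffun i => g (f i)].

Fact pullback_is_linear (I J : finType) (f : I -> J) : linear (pullback f).
Proof. by move=> a u v; apply/ffunP => i; rewrite !ffunE. Qed.

HB.instance Definition _ (I J : finType) (f : I -> J) :=
  GRing.isLinear.Build K _ _ _ (pullback f) (pullback_is_linear f).

Lemma pullbackE (I J : finType) (f : I -> J) g i : linfun (pullback f) g i = g (f i).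
Proof. by rewrite lfunE ffunE. Qed.

Lemma fixedSpace_pullbackP (T : finType) (f : T -> T) (g : {ffun T -> K^o}) :
  reflect (forall x, g (f x) = g x) (g \in fixedSpace (linfun (pullback f))).
Proof.
apply: (iffP idP) => [/fixedSpaceP/ffunP fg x | fg].
  by rewrite -pullbackE fg.
by apply/fixedSpaceP/ffunP => x; rewrite pullbackE fg.
Qed.

Lemma dim_ffun (I : finType) : \dim (fullv : {vspace {ffun I -> K^o}}) = #|I|.
Proof. by rewrite dimvf /dim /= muln1. Qed.

Lemma n_comp_le_dim_fixedSpace (T : finType) (f : T -> T) :
  (n_comp (symc (frel f)) predT <= \dim (fixedSpace (linfun (pullback f))))%N.
Proof.
set e := symc (frel f); have sym_e : connect_sym e := connect_sym_symc _.
pose root_of (x : T) : {x | roots e x} :=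
  exist (fun y => roots e y) (fingraph.root e x) (roots_root sym_e x).
pose L := linfun (pullback root_of).
have root_ofK : cancel val root_of.
  by move=> [x rx]; apply: val_inj; apply/eqP.
have L_inj : (fullv :&: lker L = 0)%VS.
  rewrite capfv; apply/eqP/lker0P => y y' Lyy'; apply/ffunP => r.
  by have /ffunP/(_ (val r)) := Lyy'; rewrite !pullbackE root_ofK.
have L_fixed : (L @: fullv <= fixedSpace (linfun (pullback f)))%VS.
  apply/subvP => _ /memv_imgP[y _ ->]; apply/fixedSpace_pullbackP => x.
  rewrite !pullbackE; congr (y _); apply: val_inj => /=.
  by apply/esym/(fingraph.rootP sym_e)/connect1; rewrite /e /symc /= eqxx.
apply: leq_trans (dimvS L_fixed); rewrite (limg_dim_eq L_inj) dim_ffun card_sig.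
by apply: eq_leq; apply: eq_card => x; rewrite !inE andbT.
Qed.

End Pullback.

Lemma loop_value_exprn (F : fieldType) (x : F) (m : nat) : x != 0 ->
  exists s : seq (int * int),
    (- x ^+ 2 - x ^- 2) ^+ m = \sum_(p <- s) p.1%:~R * x ^ (4 * p.2 - 2 * m%:Z).
Proof.
move=> x_neq0; elim: m => [|m [s IH]].
  by exists [:: (1, 0)]; rewrite big_seq1 mulr1z mul1r.
exists ([seq (- p.1, p.2 + 1) | p <- s] ++ [seq (- p.1, p.2) | p <- s]).
rewrite exprS IH big_cat !big_map /= mulr_sumr -big_split /=.
apply: eq_bigr => p _; set k := 4 * p.2 - 2 * m%:Z.
have -> : 4 * (p.2 + 1) - 2 * m.+1%:Z = k + 2 by rewrite /k; lia.
have -> : 4 * p.2 - 2 * m.+1%:Z = k + (- 2%:Z) by rewrite /k; lia.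
rewrite !expfzDr // exprnP exprnN mulrNz; ring.
Qed.

Lemma Avar_neq0 : Avar != 0.
Proof. by rewrite tofrac_eq0 polyX_eq0. Qed.

Lemma prod_tperm_flip (I : finType) (l : seq I) (p : I * bool) : uniq l ->
  (\prod_(c <- l) tperm (c, false) (c, true))%g p = (p.1, p.2 (+) (p.1 \in l)).
Proof.
elim: l p => [|c' l IH] [c s] /=; first by rewrite big_nil perm1 addbF.
case/andP => c'l ul; rewrite big_cons permM inE.
have [-> | ne] /= := eqVneq c c'.
  by case: s; rewrite ?tpermR ?tpermL IH //= (negbTE c'l).
by rewrite tpermD ?IH // xpair_eqE [c' == _]eq_sym (negbTE ne).
Qed.

Section OrientedState.
Variable D : vsdiagram.
Local Notation n := (ncross D).
Local Notation pass := ('I_n * bool)%type.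
Local Notation dt := (dart D).

(* The passage along which the curve of S0 leaves the crossing [p.1] after entering it
   along the strand [p.2]. *)
Definition s0_turn (p : pass) : pass :=
  (p.1, if is_virtual p.1 then p.2 else ~~ p.2).

Lemma s0_turnK : involutive s0_turn.
Proof. by move=> [c s]; rewrite /s0_turn /=; case: is_virtual; rewrite ?negbK. Qed.

Lemma junction_S0_turn c s : junction (S0 D) (c, s, false) (s0_turn (c, s), true).
Proof.
by rewrite /junction /s0_turn /= eqxx; case: is_virtual; rewrite /S0 /= eqxx.
Qed.

Definition s0_turn_perm : {perm pass} := perm (can_inj s0_turnK).

Lemma odd_s0_turn_perm :
  odd_perm s0_turn_perm = odd #|[set c : 'I_n | ~~ is_virtual c]|.
Proof.
set l := enum [pred c | ~~ @is_virtual D c].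
have -> : s0_turn_perm = (\prod_(c <- l) tperm (c, false) (c, true))%g.
  apply/permP => -[c s]; rewrite prod_tperm_flip ?enum_uniq // permE mem_enum inE.
  by rewrite /s0_turn /=; case: is_virtual; rewrite ?addbT ?addbF.
rewrite -(big_map (fun c => ((c, false), (c, true))) xpredT
           (fun t => tperm t.1 t.2)) odd_perm_prod.
  by rewrite size_map /l -cardE cardsE.
by apply/allP => t /mapP[c _ ->]; rewrite /dpair /= xpair_eqE andbF.
Qed.

Definition s0_next : {perm pass} := (nextp D * s0_turn_perm)%g.

Lemma s0_nextE p : s0_next p = s0_turn (nextp D p).
Proof. by rewrite permM permE. Qed.

Lemma n_comp_state_S0 : n_comp (state_rel (S0 D)) predT = #|porbits s0_next|.
Proof.
rewrite -n_comp_symc_perm.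
have sym_e : connect_sym (state_rel (S0 D)) := connect_sym_symc _.
have cl : closed (state_rel (S0 D)) predT by [].
pose out (p : pass) : dt := (p, true).
pose toward (d : dt) : pass := if d.2 then d.1 else s0_turn d.1.
have turn_step c s : state_rel (S0 D) (c, s, false) (out (s0_turn (c, s))).
  by rewrite /state_rel /symc junction_S0_turn orbT.
have arc_step p : state_rel (S0 D) (out p) (nextp D p, false).
  by rewrite /state_rel /symc /arc_rel /= eqxx.
have next_step p : connect (state_rel (S0 D)) (out p) (out (s0_next p)).
  apply: connect_trans (connect1 (arc_step p)) _.
  by rewrite s0_nextE [nextp D p]surjective_pairing; apply/connect1/turn_step.
have toward_step d d' : arc_rel d d' || junction (S0 D) d d' ->
    connect (symc (frel s0_next)) (toward d) (toward d').
  case: d d' => [[c s] o] [[c' s'] o'] /orP[/and3P[/= -> /negPf -> /eqP ->]|].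
    by apply: connect1; rewrite /symc /= s0_nextE eqxx.
  rewrite /junction /toward /s0_turn => /andP[/eqP <-] /=.
  by case: is_virtual => /andP[/andP[/eqP -> /negPf ->] ->]; apply: connect0.
rewrite (@adjunction_n_comp _ _ out _ (symc (frel s0_next)) sym_e
          (connect_sym_symc _) predT cl); last first.
  apply: (@intro_adjunction _ _ out _ _ (connect_sym_symc _) _ cl
           (fun d _ => toward d)) => [d _ | p _]; split.
  - case: d => [[c s] []]; first exact: connect0.
    exact/connect1/turn_step.
  - by move=> d' _ /orP[/toward_step | /toward_step]; rewrite // connect_sym_symc.
  - by rewrite /toward /= connect0.
  - by move=> p' /orP[] /eqP <-; [| rewrite sym_e]; apply: next_step.
exact: eq_n_comp_r.
Qed.

Lemma odd_ncurves_S0 :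
  odd (ncurves (S0 D)) = odd (ncomp D) (+) odd #|[set c : 'I_n | ~~ is_virtual c]|.
Proof.
have odd_porbits_next : odd #|porbits s0_next| =
    odd #|porbits (nextp D)| (+) odd #|[set c : 'I_n | ~~ is_virtual c]|.
  rewrite -odd_s0_turn_perm; have := odd_permM (nextp D) s0_turn_perm.
  rewrite -/s0_next /odd_perm -!addbA.
  by move/(congr1 (addb (odd #|{: pass}|))); rewrite !addKb.
rewrite /ncurves /ncomp n_comp_state_S0 n_comp_symc_perm !oddD odd_porbits_next.
by case: (odd (nfree D)); case: (odd #|_|); case: (odd #|_|).
Qed.

Lemma card_nonvirtual : #|[set c : 'I_n | ~~ is_virtual c]| =
  (#|[set c : 'I_n | is_negative c]| + #|[set c : 'I_n | is_positive c]|
   + #|[set c : 'I_n | is_singular c]|)%N.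
Proof.
rewrite !card_set_sum_nat -!big_split; apply: eq_bigr => c _ /=.
rewrite /is_virtual /is_negative /is_positive /is_singular.
by case: kind => //= o; case: (_ == o).
Qed.

Lemma a_S0 : a_S (S0 D) =
  #|[set c : 'I_n | is_negative c]|%:Z - #|[set c : 'I_n | is_positive c]|%:Z.
Proof.
by rewrite /a_S; congr (_%:Z - _%:Z); apply: eq_card => c; rewrite !inE andbT.
Qed.

Lemma b_S0 : b_S (S0 D) = 0.
Proof.
by rewrite /b_S !(@eq_card0 _ [set c | _ && S0 D c]) // => c; rewrite inE andbF.
Qed.

Lemma alpha_S0 : alpha_S (S0 D) = #|[set c : 'I_n | is_singular c]|.
Proof. by apply: eq_card => c; rewrite !inE andbT. Qed.

Lemma beta_S0 : beta_S (S0 D) = 0%N.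
Proof. by apply: eq_card0 => c; rewrite inE andbF. Qed.

Lemma S0_exponent : exists q : int,
  a_S (S0 D) - (alpha_S (S0 D) + ncurves (S0 D))%:Z = 2 * q + (ncomp D)%:Z.
Proof.
have := odd_ncurves_S0; rewrite a_S0 alpha_S0 card_nonvirtual.
set neg := #|_|; set pos := #|_|; set sing := #|_|.
set nc := ncurves _; set k := ncomp D => odd_nc; clearbody neg pos sing nc k.
set N := (neg + pos + sing + nc + k)%N.
have even_N : ~~ odd N.
  rewrite /N !oddD odd_nc !oddD.
  by case: (odd neg); case: (odd pos); case: (odd sing); case: (odd k).
have N_half : N = (N./2 * 2)%N by rewrite -{1}(odd_double_half N) (negbTE even_N) muln2.
exists ((N./2)%:Z - pos%:Z - sing%:Z - nc%:Z - k%:Z).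
move: N_half; rewrite /N; lia.
Qed.

End OrientedState.

Local Notation F2 := ('F_2)^o.

Lemma pchar_F2 : 2 \in [pchar 'F_2].
Proof. exact: pchar_Fp. Qed.

Lemma F2_neq0D (x y : 'F_2) : (x + y != 0) = (x != 0) (+) (y != 0).
Proof. by move: x y; do 2![case=> -[|[|//]] ?]. Qed.

Lemma F2_addr_eq0 (x y : 'F_2) : (x + y == 0) = (x == y).
Proof. by move: x y; do 2![case=> -[|[|//]] ?]. Qed.

Lemma F2_natr_neq0 (b : bool) : (b%:R : 'F_2) != 0 = b.
Proof. by case: b. Qed.

Lemma addrr_F2 (I : finType) (f : {ffun I -> F2}) : f + f = 0.
Proof. by apply/ffunP => x; rewrite !ffunE addrr_pchar2 ?pchar_F2. Qed.

Section FaceColouring.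
Variable D : vsdiagram.
Local Notation n := (ncross D).
Local Notation pass := ('I_n * bool)%type.
Local Notation dt := (dart D).

Lemma alphaK : involutive (@alpha D).
Proof.
move=> [[c s] []] /=.
  by case: (nextp D (c, s)) (permK (nextp D) (c, s)) => c' s' /= ->.
by case: ((nextp D)^-1%g (c, s)) (permKV (nextp D) (c, s)) => c' s' /= ->.
Qed.

Lemma sigma_phi_alpha (d : dt) : sigma d = phi (alpha d).
Proof. by rewrite /phi alphaK. Qed.

Lemma sum_crossing_sigma (V : nmodType) (t : dt -> V) c :
  \sum_s \sum_o t (sigma (c, s, o)) = \sum_s \sum_o t (c, s, o).
Proof.
rewrite !big_bool /= /sigma.
by case: (Defs.rot D c); rewrite /= addrC; congr (_ + _); rewrite addrC.
Qed.


Definition edge_space : {vspace {ffun dt -> F2}} :=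
  fixedSpace (linfun (pullback (@alpha D))).

Definition face_space : {vspace {ffun dt -> F2}} :=
  fixedSpace (linfun (pullback (@phi D))).

Definition crossing_sum (t : {ffun dt -> F2}) : {ffun 'I_n -> F2} :=
  [ffun c => \sum_s \sum_o t (c, s, o)].

Fact crossing_sum_is_linear : linear crossing_sum.
Proof.
move=> a u v; apply/ffunP => c; rewrite !ffunE !big_bool /= !ffunE.
by rewrite /GRing.scale /=; ring.
Qed.

HB.instance Definition _ :=
  GRing.isLinear.Build 'F_2 _ _ _ crossing_sum crossing_sum_is_linear.

Definition cycle_space : {vspace {ffun dt -> F2}} :=
  (edge_space :&: lker (linfun crossing_sum))%VS.

Definition coboundary : 'End({ffun dt -> F2}) :=
  (\1 + linfun (pullback (@sigma D)))%VF.

Lemma coboundaryE g d : coboundary g d = g d + g (sigma d).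
Proof. by rewrite add_lfunE id_lfunE ffunE pullbackE. Qed.

Lemma dim_edge_space : (\dim edge_space <= 2 * n)%N.
Proof.
pose out (p : pass) : dt := (p, true).
have out_inj : (edge_space :&: lker (linfun (pullback out)) = 0)%VS.
  apply/eqP; rewrite -subv0; apply/subvP => t.
  case/memv_capP => /fixedSpace_pullbackP t_alpha; rewrite memv_ker memv0.
  move=> /eqP/ffunP t_out; apply/eqP/ffunP => -[[c s] o]; rewrite ffunE.
  have t_out' c' s' : t (c', s', true) = 0.
    by have := t_out (c', s'); rewrite pullbackE ffunE.
  case: o; first exact: t_out'.
  by rewrite -t_alpha /=; case: ((nextp D)^-1%g _) => c' s'; apply: t_out'.
rewrite -(limg_dim_eq out_inj); apply: leq_trans (dimvS (subvf _)) _.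
by rewrite dim_ffun card_prod card_ord card_bool mulnC.
Qed.

Definition delta_fun (c : 'I_n) : {ffun 'I_n -> F2} := [ffun x => (x == c)%:R].

Definition dart_fun (d : dt) : {ffun dt -> F2} := [ffun x => (x == d)%:R].

Lemma crossing_sum_dart_fun d : crossing_sum (dart_fun d) = delta_fun d.1.1.
Proof.
apply/ffunP => x; case: d => [[c s] o]; rewrite !ffunE !big_bool /= !ffunE.
by rewrite !xpair_eqE; case: (x == c); case: s; case: o; rewrite ?addr0 ?add0r.
Qed.

Lemma arc_boundary_mem (p : pass) :
  delta_fun p.1 + delta_fun (nextp D p).1
    \in (linfun crossing_sum @: edge_space)%VS.
Proof.
case: p => c s; set d : dt := (c, s, true).
apply/memv_imgP; exists (dart_fun d + dart_fun (alpha d)).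
  apply/fixedSpace_pullbackP => x.
  by rewrite !ffunE (inj_eq (can_inj alphaK)) (inv_eq alphaK) addrC.
by rewrite lfunE linearD /= !crossing_sum_dart_fun.
Qed.

Definition total_sum (y : {ffun 'I_n -> F2}) : F2 := \sum_c y c.

Fact total_sum_is_linear : linear total_sum.
Proof.
move=> a u v; rewrite /total_sum /GRing.scale /= mulr_sumr -big_split /=.
by apply: eq_bigr => c _; rewrite !ffunE.
Qed.

HB.instance Definition _ :=
  GRing.isLinear.Build 'F_2 _ _ _ total_sum total_sum_is_linear.

Lemma coboundary_face_space_sub : (coboundary @: face_space <= cycle_space)%VS.
Proof.
apply/subvP => _ /memv_imgP[g /fixedSpace_pullbackP g_phi ->].
apply/memv_capP; split.
  apply/fixedSpace_pullbackP => d; rewrite !coboundaryE.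
  by rewrite -[sigma (alpha d)]/(phi d) g_phi sigma_phi_alpha g_phi addrC.
have sum_sigma : crossing_sum (linfun (pullback (@sigma D)) g) = crossing_sum g.
  apply/ffunP => c; rewrite !ffunE -[RHS](sum_crossing_sigma g).
  by apply: eq_bigr => s _; apply: eq_bigr => o _; rewrite pullbackE.
by rewrite memv_ker lfunE /= add_lfunE id_lfunE linearD /= sum_sigma addrr_F2.
Qed.

Section Connected.
Variable c0 : 'I_n.
Hypothesis connected : forall c c', connect (symc (@cadj D)) c c'.

Lemma delta_fun_addr_mem c :
  delta_fun c + delta_fun c0 \in (linfun crossing_sum @: edge_space)%VS.
Proof.
pose P := [pred c | delta_fun c + delta_fun c0
                     \in (linfun crossing_sum @: edge_space)%VS].
have P_closed : closed (symc (@cadj D)) P.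
  apply: intro_closed; first exact: connect_sym_symc.
  move=> a b e_ab; rewrite !inE => Pa.
  have -> : delta_fun b + delta_fun c0 =
      (delta_fun a + delta_fun c0) + (delta_fun a + delta_fun b).
    by rewrite addrACA addrr_F2 add0r addrC.
  apply: memvD => //; case/orP: e_ab => /existsP[s /eqP <-].
    exact: (arc_boundary_mem (a, s)).
  by rewrite addrC; apply: (arc_boundary_mem (b, s)).
rewrite -[_ \in _]/(c \in P) -(closed_connect P_closed (connected c0 c)) inE.
by rewrite addrr_F2 mem0v.
Qed.

Lemma lker_total_sum_sub :
  (lker (linfun total_sum) <= linfun crossing_sum @: edge_space)%VS.
Proof.
apply/subvP => y; rewrite memv_ker lfunE /= /total_sum => /eqP y_sum0.
have -> : y = \sum_c y c *: (delta_fun c + delta_fun c0).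
  apply/ffunP => x; rewrite sum_ffunE.
  rewrite (eq_bigr (fun c => y c * (x == c)%:R + y c * (x == c0)%:R)); last first.
    by move=> c _; rewrite !ffunE /GRing.scale /= mulrDr.
  rewrite big_split /= -mulr_suml y_sum0 mul0r addr0.
  rewrite (bigD1 x) //= eqxx mulr1 big1 ?addr0 // => c /negPf.
  by rewrite eq_sym => ->; rewrite mulr0.
by apply: memv_suml => c _; apply/memvZ/delta_fun_addr_mem.
Qed.

Lemma dim_cycle_space : (\dim cycle_space <= n + 1)%N.
Proof.
have dim_img : (n - 1 <= \dim (linfun crossing_sum @: edge_space))%N.
  apply: leq_trans (dimvS lker_total_sum_sub).
  have := limg_ker_dim (linfun total_sum) fullv; rewrite capfv dim_ffun card_ord.
  have : (\dim (linfun total_sum @: fullv) <= 1)%N.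
    by apply: leq_trans (dimvS (subvf _)) _; rewrite dimvf /dim.
  lia.
have rank : (\dim cycle_space + \dim (linfun crossing_sum @: edge_space)
             = \dim edge_space)%N := limg_ker_dim _ _.
have edge_le : (\dim edge_space <= 2 * n)%N := dim_edge_space.
have : (0 < n)%N by case: (n) c0 => -[].
lia.
Qed.

Lemma face_space_coboundary_ker :
  (face_space :&: lker coboundary <= <[[ffun => 1] : {ffun dt -> F2}]>)%VS.
Proof.
apply/subvP => g /memv_capP[/fixedSpace_pullbackP g_phi].
rewrite memv_ker => /eqP/ffunP g_cob.
have g_sigma d : g (sigma d) = g d.
  by have /eqP := g_cob d; rewrite coboundaryE ffunE F2_addr_eq0 => /eqP.
have g_alpha x : g (alpha x) = g x by rewrite -[g x]g_sigma sigma_phi_alpha g_phi.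
pose gc c := g (c, false, false).
have g_crossing c s o : g (c, s, o) = gc c.
  move: (g_sigma (c, false, false)) (g_sigma (c, true, false)).
  move: (g_sigma (c, false, true)) (g_sigma (c, true, true)).
  by rewrite /sigma /gc; case: (Defs.rot D c); case: s; case: o => /=; congruence.
have gc_adj a b : symc (@cadj D) a b -> gc a = gc b.
  have arc a' s : gc a' = gc (nextp D (a', s)).1.
    by rewrite -(g_crossing a' s true) -g_alpha /= g_crossing.
  by case/orP => /existsP[s /eqP <-]; rewrite -arc.
have gc_closed : closed (symc (@cadj D)) [pred c | gc c == gc c0].
  by move=> a b /gc_adj; rewrite !inE => ->.
apply/vlineP; exists (gc c0); apply/ffunP => -[[c s] o].
rewrite !ffunE /GRing.scale /= mulr1 g_crossing; apply/eqP.
by have := closed_connect gc_closed (connected c0 c); rewrite !inE eqxx.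
Qed.

Hypothesis nfaces_planar : nfaces D = (n + 2)%N.

(* Euler's formula closes the gap:
   dim (coboundary @: face_space) >= #faces - 1 = n + 1 >= dim cycle_space. *)
Lemma coboundary_face_space : (coboundary @: face_space)%VS = cycle_space.
Proof.
apply/eqP; rewrite eqEdim coboundary_face_space_sub /=.
have rank : (\dim (face_space :&: lker coboundary) + \dim (coboundary @: face_space)
             = \dim face_space)%N := limg_ker_dim _ _.
have ker_le1 : (\dim (face_space :&: lker coboundary) <= 1)%N.
  by apply: leq_trans (dimvS face_space_coboundary_ker) _; rewrite dim_vline leq_b1.
have faces_le : (nfaces D <= \dim face_space)%N := n_comp_le_dim_fixedSpace _ _.
have cycle_le : (\dim cycle_space <= n + 1)%N := dim_cycle_space.
rewrite nfaces_planar in faces_le.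
suff : (\dim cycle_space <= \dim (coboundary @: face_space))%N by [].
lia.
Qed.

End Connected.

End FaceColouring.

Section Parity.
Variable D : vsdiagram.
Local Notation n := (ncross D).
Local Notation dt := (dart D).

Lemma even_sum_alpha_invariant (P : pred dt) :
  (forall d, P (alpha d) = P d) -> ~~ odd (\sum_d P d).
Proof.
move=> P_alpha.
have -> : (\sum_d P d = \sum_d (P d && d.2) + \sum_d (P d && ~~ d.2))%N.
  by rewrite -big_split; apply: eq_bigr => d _; case: (P d); case: d.2.
have -> : (\sum_d (P d && ~~ d.2) = \sum_d (P d && d.2))%N.
  rewrite (reindex_inj (can_inj (@alphaK D))); apply: eq_bigr => -[[c s] o] _.
  by rewrite P_alpha; case: o.
by rewrite addnn odd_double.
Qed.

Lemma odd_corner_pairs c (g tau : dt -> bool) :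
  (forall d, tau d = g d (+) g (sigma d)) ->
  (forall s, tau (c, s, false) = tau (s0_turn (c, s), true)) ->
  odd (\sum_s \sum_o (g (c, s, o) && g (sigma (c, s, o)))) =
  is_virtual c && (tau (c, false, false) != tau (c, true, false)).
Proof.
move=> tau_g tau_turn; move: (tau_turn false) (tau_turn true).
rewrite !big_bool /= !tau_g /s0_turn /sigma /=.
case: (Defs.rot D c); case: (is_virtual c) => /=;
  case: (g (c, true, true)); case: (g (c, true, false));
  case: (g (c, false, true)); case: (g (c, false, false)) => //=.
Qed.

(* Count the pairs of consecutive corners [d], [sigma d] both coloured by [g]: [alpha]
   preserves them, so there is an even number of them, while by [odd_corner_pairs] a
   crossing carries an odd number of them exactly when it lies in the set below. *)
Lemma even_virtual_disagreements (g tau : dt -> bool) :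
  (forall d, g (phi d) = g d) ->
  (forall d, tau d = g d (+) g (sigma d)) ->
  (forall d, tau (alpha d) = tau d) ->
  (forall c s, tau (c, s, false) = tau (s0_turn (c, s), true)) ->
  ~~ odd #|[set v : 'I_n | is_virtual v &&
                            (tau (v, false, false) != tau (v, true, false))]|.
Proof.
move=> g_phi tau_g tau_alpha tau_turn.
have pairs_alpha d : g (alpha d) && g (sigma (alpha d)) = g d && g (sigma d).
  have := tau_alpha d; rewrite !tau_g -[sigma (alpha d)]/(phi d) g_phi.
  by case: (g d); case: (g (alpha d)); case: (g (sigma d)).
have := even_sum_alpha_invariant pairs_alpha.
have -> : (\sum_d (g d && g (sigma d)) =
           \sum_c \sum_s \sum_o (g (c, s, o) && g (sigma (c, s, o))))%N.
  by rewrite pair_bigA /= pair_bigA /=; apply: eq_bigr => -[[c s] o].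
rewrite card_set_sum_nat !(big_morph odd oddD (erefl : odd 0 = false)).
rewrite (eq_bigr _ (fun c _ => odd_corner_pairs tau_g (tau_turn c))).
by rewrite (eq_bigr _ (fun c _ => oddb _)).
Qed.

Lemma tau_ok_S0_step tau d d' : tau_ok (S0 D) tau ->
  arc_rel d d' || junction (S0 D) d d' -> tau d = tau d'.
Proof.
move=> /forallP/(_ d)/forallP/(_ d')/andP[arc junc].
case/orP => [/(implyP arc)/eqP // | /(implyP junc)].
by rewrite andbF => /eqP/negbFE/eqP.
Qed.

Lemma tau_ok_S0_alpha tau d : tau_ok (S0 D) tau -> tau (alpha d) = tau d.
Proof.
move=> ok; case: d => [[c s] []] /=.
  symmetry; apply: (tau_ok_S0_step ok).
  by rewrite /arc_rel /= -surjective_pairing eqxx.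
by apply: (tau_ok_S0_step ok); rewrite /arc_rel /= -surjective_pairing permKV eqxx.
Qed.

Lemma tau_ok_S0_turn tau c s : tau_ok (S0 D) tau ->
  tau (c, s, false) = tau (s0_turn (c, s), true).
Proof. by move=> ok; apply: (tau_ok_S0_step ok); rewrite junction_S0_turn orbT. Qed.

Lemma S0_labelling_cycle (tau : dt -> bool) :
  (forall d, tau (alpha d) = tau d) ->
  (forall c s, tau (c, s, false) = tau (s0_turn (c, s), true)) ->
  [ffun d => (tau d)%:R : F2] \in cycle_space D.
Proof.
move=> tau_alpha tau_turn; apply/memv_capP; split.
  by apply/fixedSpace_pullbackP => d; rewrite !ffunE tau_alpha.
rewrite memv_ker lfunE; apply/eqP/ffunP => c.
rewrite !ffunE !big_bool /= !ffunE !tau_turn /s0_turn /=.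
by case: is_virtual; case: (tau (c, true, true)); case: (tau (c, false, true));
  apply: val_inj.
Qed.

End Parity.

Lemma S0_even_parity_of_faces (D : vsdiagram) (c0 : 'I_(ncross D)) :
  (forall c c', connect (symc (@cadj D)) c c') ->
  nfaces D = (ncross D + 2)%N -> ~~ odd_parity (S0 D).
Proof.
move=> connected nfaces_planar; apply/existsP => -[tau /andP[ok odd_count]].
have tau_alpha d := tau_ok_S0_alpha d ok.
have tau_turn c s := tau_ok_S0_turn c s ok.
have := S0_labelling_cycle tau_alpha tau_turn.
rewrite -(coboundary_face_space c0 connected nfaces_planar).
case/memv_imgP => g /fixedSpace_pullbackP g_phi t_g.
have tau_g d : tau d = (g d != 0) (+) (g (sigma d) != 0).
  have /ffunP/(_ d) := t_g; rewrite ffunE coboundaryE.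
  by move=> /(congr1 (fun x => x != 0)); rewrite F2_natr_neq0 F2_neq0D.
have g_phi' d : (g (phi d) != 0) = (g d != 0) by rewrite g_phi.
have := @even_virtual_disagreements D (fun d => g d != 0) tau g_phi' tau_g.
by move/(_ tau_alpha tau_turn); rewrite odd_count.
Qed.

Lemma S0_even_parity (D : vsdiagram) :
  planar D -> connected_diagram D -> ~~ odd_parity (S0 D).
Proof.
rewrite /connected_diagram => planarD; case: (posnP (ncross D)) => [n0 _ | n_gt0].
  have no_crossing (A : {set 'I_(ncross D)}) : #|A| = 0%N.
    by apply/eqP; rewrite -leqn0 -n0 -[X in (_ <= X)%N]card_ord max_card.
  by apply/existsP => -[tau /andP[_]]; rewrite no_crossing.
move=> -[_ connected].
pose c0 := Ordinal n_gt0; apply: (S0_even_parity_of_faces c0 connected).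
have sym_cadj : connect_sym (symc (@cadj D)) := connect_sym_symc _.
suff ngraph1 : ngraphcomp D = 1%N by rewrite planarD ngraph1.
rewrite -(n_comp_connect sym_cadj c0); apply: eq_n_comp_r => c.
by rewrite !inE connected.
Qed.

Theorem lemma4p2 (D : vsdiagram) :
  planar D -> connected_diagram D ->
  exists s : seq (int * int),
    Rbar (S0 D) = \sum_(p <- s) p.1%:~R * Avar ^ (4 * p.2 + 2 * (ncomp D)%:Z).
Proof.
move=> planarD connectedD.
have [q exponent] := S0_exponent D.
have [s expansion] := loop_value_exprn (alpha_S (S0 D) + ncurves (S0 D)) Avar_neq0.
exists [seq (p.1, p.2 + q) | p <- s].
rewrite /Rbar (negbTE (S0_even_parity planarD connectedD)) b_S0 beta_S0 expansion.
rewrite mulr0 addr0 expr0 !mulr1 big_map mulr_sumr; apply: eq_bigr => p _ /=.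
rewrite mulrCA -expfzDr ?Avar_neq0 //; congr (_ * Avar ^ _).
by move: exponent; lia.
Qed.
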